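(* Let $(\mathcal A,\otimes,\mathbb 1)$ be a monoidal category and $\mathbb B=(\mathrm B,\mu^{\mathbb B},\eta^{\mathbb B})$ an opmonoidal monad on $\mathcal A$ with opmonoidal constraints $\mathrm B_2(X,Y)\colon\mathrm B(X\otimes Y)\to\mathrm B(X)\otimes\mathrm B(Y)$ and $\mathrm B_0\colon\mathrm B(\mathbb 1)\to\mathbb 1$. Let $\mathbb C$ be the comonad on $\mathcal A$ with $\mathrm C(X)=\mathrm B(\mathbb 1)\otimes X$, $\mathrm C(f)=\mathrm{id}_{\mathrm B(\mathbb 1)}\otimes f$, $\Delta^{\mathbb C}_X=\mathrm B_2(\mathbb 1,\mathbb 1)\otimes X$, $\varepsilon^{\mathbb C}_X=\mathrm B_0\otimes\mathrm{id}_X$, and $\theta_X=(\mu^{\mathbb B}_{\mathbb 1}\otimes\mathrm{id}_{\mathrm B(X)})\mathrm B_2(\mathrm B(\mathbb 1),X)\colon\mathrm{BC}(X)\to\mathrm{CB}(X)$ the associated mixed distributive law of $\mathbb B$ over $\mathbb C$. Let $\mathrm F\dashv\mathrm U$ be the Eilenberg--Moore adjunction of $\mathbb B$, $\mathbb T$ the induced comonad on $\mathcal A^{\mathbb B}$, $\mathbb C^\theta$ the comonad on $\mathcal A^{\mathbb B}$ with $\mathrm C^\theta(X,\alpha)=(\mathrm B(\mathbb 1)\otimes X,(\mu^{\mathbb B}_{\mathbb 1}\otimes\alpha)\mathrm B_2(\mathrm B(\mathbb 1),X))$ and comultiplication/counit those of $\mathbb C$, $\chi\colon\mathrm T\mathrm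 C^\theta\Rightarrow\mathrm C^\theta\mathrm T$ given by $\chi_{(X,\alpha)}=\theta_X$, $\mathrm V\colon(\mathcal A^{\mathbb B})_{\mathbb C^\theta}\rightleftarrows\mathcal A^{\mathbb B}\colon\mathrm G$ the Eilenberg--Moore adjunction of $\mathbb C^\theta$, $\mathbb T^\theta$ the comonad on $(\mathcal A^{\mathbb B})_{\mathbb C^\theta}$ with $\mathrm T^\theta((X,\alpha),\delta)=((\mathrm B(X),\mu^{\mathbb B}_X),\theta_X\mathrm B(\delta))$, $\mathrm T^\theta(f)=\mathrm T(f)$ and comultiplication/counit those of $\mathbb T$, and $\tilde\Omega\colon\mathrm T^\theta\mathrm G\Rightarrow\mathrm G\mathrm T$ given by $\tilde\Omega_{(X,\alpha)}=(\mu^{\mathbb B}_{\mathbb 1}\otimes\mathrm{id}_{\mathrm B(X)})\mathrm B_2(\mathrm B(\mathbb 1),X)$. If $\mathbb B$ is a right pre-Hopf monad, then $\tilde\Omega$ implements an extension $\mathbb T^\theta$ of $\mathbb T$ through $\mathrm V\dashv\mathrm G$, and for every category $\mathcal Z$ and functor $\mathrm N\colon\mathcal A^{\mathbb B}\to\mathcal Z$, the left $\chi$-coalgebra structures on $\mathrm N$ correspond bijectively to $\mathbb T^\theta$-opcoalgebra structures on $\mathrm{NV}$.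
   Context: Associativity and unit constraints of the monoidal category are suppressed. An opmonoidal monad is a monad whose endofunctor is opmonoidal (with $\mathrm B_2,\mathrm B_0$ satisfying the opmonoidal functor axioms) and whose multiplication and unit are opmonoidal natural transformations. The right fusion operator is $H^r_{X,Y}=(\mu^{\mathbb B}_X\otimes\mathrm{id}_{\mathrm B(Y)})\mathrm B_2(\mathrm B(X),Y)\colon\mathrm B(\mathrm B(X)\otimes Y)\to\mathrm B(X)\otimes\mathrm B(Y)$; $\mathbb B$ is a right pre-Hopf monad if $H^r_{\mathbb 1,X}$ is an isomorphism for all $X$. $\mathcal A^{\mathbb B}$ is the category of $\mathbb B$-algebras $(X,\alpha)$; $\mathrm F(X)=(\mathrm B(X),\mu^{\mathbb B}_X)$, $\mathrm U$ forgetful, counit $\varepsilon_{(X,\alpha)}=\alpha$; $\mathbb T=(\mathrm{FU},\mathrm F\eta^{\mathbb B}\mathrm U,\varepsilon)$. $(\mathcal A^{\mathbb B})_{\mathbb C^\theta}$ is the category of $\mathbb C^\theta$-coalgebras $(Y,\delta)$; $\mathrm V$ forgetful, $\mathrm G(Y)=(\mathrm C^\theta(Y),\Delta^{\mathbb C^\theta}_Y)$. ''$\tilde\Omega$ implements an extension $\mathbb T^\theta$ of $\mathbb T$'' means $\tilde\Omega$ is a natural isomorphism and $(\mathrm G,\tilde\Omega)$ is a lax morphism of comonads from $\mathbb T^\theta$ to $\mathbb T$: $\mathrm G\Delta^{\mathbb T}\circ\tilde\Omega=\tilde\Omega\mathrm T\circ\mathrm T^\theta\tilde\Omega\circ\Delta^{\mathbb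 T^\theta}\mathrm G$ and $\mathrm G\varepsilon^{\mathbb T}\circ\tilde\Omega=\varepsilon^{\mathbb T^\theta}\mathrm G$. A left $\chi$-coalgebra structure on $\mathrm N$ is $\lambda\colon\mathrm N\mathrm C^\theta\Rightarrow\mathrm{NT}$ with $\mathrm N\Delta^{\mathbb T}\circ\lambda=\lambda\mathrm T\circ\mathrm N\chi\circ\lambda\mathrm C^\theta\circ\mathrm N\Delta^{\mathbb C^\theta}$ and $\mathrm N\varepsilon^{\mathbb T}\circ\lambda=\mathrm N\varepsilon^{\mathbb C^\theta}$. A $\mathbb T^\theta$-opcoalgebra structure on $\mathrm P$ is $\nabla\colon\mathrm P\Rightarrow\mathrm P\mathrm T^\theta$ with $\mathrm P\Delta^{\mathbb T^\theta}\circ\nabla=\nabla\mathrm T^\theta\circ\nabla$, $\mathrm P\varepsilon^{\mathbb T^\theta}\circ\nabla=\mathrm{id}_{\mathrm P}$. Juxtaposition is composition/whiskering, $\circ$ vertical composition. *)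

From Stdlib Require Import ProofIrrelevance.

Set Implicit Arguments.
Unset Strict Implicit.

Record Category := {
  Obj :> Type;
  Hom : Obj -> Obj -> Type;
  idm : forall X, Hom X X;
  comp : forall X Y Z, Hom Y Z -> Hom X Y -> Hom X Z;
  comp_idl : forall X Y (f : Hom X Y), comp (idm Y) f = f;
  comp_idr : forall X Y (f : Hom X Y), comp f (idm X) = f;
  comp_assoc : forall W X Y Z (h : Hom Y Z) (g : Hom X Y) (f : Hom W X),
      comp h (comp g f) = comp (comp h g) f }.

Arguments Hom c _ _ : clear implicits.
Arguments idm {c} X.
Arguments comp {c X Y Z} _ _.

Notation "g ∘ f" := (comp g f) (at level 40, left associativity).

Definition is_iso (C : Category) (X Y : C) (f : Hom C X Y) : Prop :=
  exists g : Hom C Y X, g ∘ f = idm X /\ f ∘ g = idm Y.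

Record Functor (C D : Category) := {
  fobj :> C -> D;
  fmap : forall X Y, Hom C X Y -> Hom D (fobj X) (fobj Y);
  fmap_id : forall X, fmap (idm X) = idm (fobj X);
  fmap_comp : forall X Y Z (g : Hom C Y Z) (f : Hom C X Y),
      fmap (g ∘ f) = fmap g ∘ fmap f }.

Arguments fmap {C D} f {X Y} _ : rename.

Record Comonad (C : Category) := {
  cfun :> Functor C C;
  cdelta : forall X, Hom C (cfun X) (cfun (cfun X));
  ceps : forall X, Hom C (cfun X) X;
  cdelta_nat : forall X Y (f : Hom C X Y),
      fmap cfun (fmap cfun f) ∘ cdelta X = cdelta Y ∘ fmap cfun f;
  ceps_nat : forall X Y (f : Hom C X Y), f ∘ ceps X = ceps Y ∘ fmap cfun f;
  ccoassoc : forall X, fmap cfun (cdelta X) ∘ cdelta X = cdelta (cfun X) ∘ cdelta X;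
  ccounit_l : forall X, ceps (cfun X) ∘ cdelta X = idm (cfun X);
  ccounit_r : forall X, fmap cfun (ceps X) ∘ cdelta X = idm (cfun X) }.

Arguments cdelta {C} c X.
Arguments ceps {C} c X.

Lemma sig_eq (T : Type) (P : T -> Prop) (a b : {x | P x}) :
  proj1_sig a = proj1_sig b -> a = b.
Proof.
  destruct a as [a pa], b as [b pb]; simpl; intros ->; f_equal;
  apply proof_irrelevance.
Qed.

Record MonoidalCategory := {
  mcat :> Category;
  tens : mcat -> mcat -> mcat;
  tensm : forall X X' Y Y', Hom mcat X X' -> Hom mcat Y Y' ->
      Hom mcat (tens X Y) (tens X' Y');
  tens_id : forall X Y, tensm (idm X) (idm Y) = idm (tens X Y);
  tens_comp : forall X X' X'' Y Y' Y'' (f' : Hom mcat X' X'') (f : Hom mcat X X')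
      (g' : Hom mcat Y' Y'') (g : Hom mcat Y Y'),
      tensm (f' ∘ f) (g' ∘ g) = tensm f' g' ∘ tensm f g;
  munit : mcat;
  alpha : forall X Y Z, Hom mcat (tens (tens X Y) Z) (tens X (tens Y Z));
  alpha_inv : forall X Y Z, Hom mcat (tens X (tens Y Z)) (tens (tens X Y) Z);
  alpha_iso1 : forall X Y Z, alpha_inv X Y Z ∘ alpha X Y Z = idm _;
  alpha_iso2 : forall X Y Z, alpha X Y Z ∘ alpha_inv X Y Z = idm _;
  alpha_nat : forall X X' Y Y' Z Z' (f : Hom mcat X X') (g : Hom mcat Y Y')
      (h : Hom mcat Z Z'),
      tensm f (tensm g h) ∘ alpha X Y Z = alpha X' Y' Z' ∘ tensm (tensm f g) h;
  lam : forall X, Hom mcat (tens munit X) X;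
  lam_inv : forall X, Hom mcat X (tens munit X);
  lam_iso1 : forall X, lam_inv X ∘ lam X = idm _;
  lam_iso2 : forall X, lam X ∘ lam_inv X = idm _;
  lam_nat : forall X Y (f : Hom mcat X Y), f ∘ lam X = lam Y ∘ tensm (idm munit) f;
  rho : forall X, Hom mcat (tens X munit) X;
  rho_inv : forall X, Hom mcat X (tens X munit);
  rho_iso1 : forall X, rho_inv X ∘ rho X = idm _;
  rho_iso2 : forall X, rho X ∘ rho_inv X = idm _;
  rho_nat : forall X Y (f : Hom mcat X Y), f ∘ rho X = rho Y ∘ tensm f (idm munit);
  pentagon : forall W X Y Z,
      alpha W X (tens Y Z) ∘ alpha (tens W X) Y Z
      = tensm (idm W) (alpha X Y Z) ∘ alpha W (tens X Y) Z ∘ tensm (alpha W X Y) (idm Z);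
  triangle : forall X Y,
      tensm (idm X) (lam Y) ∘ alpha X munit Y = tensm (rho X) (idm Y) }.

Arguments tens {m} _ _.
Arguments tensm {m X X' Y Y'} _ _.
Arguments munit {m}.
Arguments alpha {m} X Y Z.
Arguments lam {m} X.
Arguments lam_inv {m} X.
Arguments rho {m} X.

Notation "X ⊗ Y" := (tens X Y) (at level 30, right associativity).
Notation "f ⊠ g" := (tensm f g) (at level 30, right associativity).

Record OpmonoidalMonad (A : MonoidalCategory) := {
  Bo : A -> A;
  Bm : forall X Y, Hom A X Y -> Hom A (Bo X) (Bo Y);
  Bm_id : forall X, Bm (idm X) = idm (Bo X);
  Bm_comp : forall X Y Z (g : Hom A Y Z) (f : Hom A X Y),
      Bm (g ∘ f) = Bm g ∘ Bm f;
  mu : forall X, Hom A (Bo (Bo X)) (Bo X);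
  eta : forall X, Hom A X (Bo X);
  mu_nat : forall X Y (f : Hom A X Y), Bm f ∘ mu X = mu Y ∘ Bm (Bm f);
  eta_nat : forall X Y (f : Hom A X Y), Bm f ∘ eta X = eta Y ∘ f;
  mu_assoc : forall X, mu X ∘ Bm (mu X) = mu X ∘ mu (Bo X);
  mu_eta_l : forall X, mu X ∘ eta (Bo X) = idm (Bo X);
  mu_eta_r : forall X, mu X ∘ Bm (eta X) = idm (Bo X);
  B2 : forall X Y, Hom A (Bo (X ⊗ Y)) (Bo X ⊗ Bo Y);
  B0 : Hom A (Bo munit) munit;
  B2_nat : forall X X' Y Y' (f : Hom A X X') (g : Hom A Y Y'),
      (Bm f ⊠ Bm g) ∘ B2 X Y = B2 X' Y' ∘ Bm (f ⊠ g);
  B2_coassoc : forall X Y Z,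
      alpha (Bo X) (Bo Y) (Bo Z) ∘ (B2 X Y ⊠ idm (Bo Z)) ∘ B2 (X ⊗ Y) Z
      = (idm (Bo X) ⊠ B2 Y Z) ∘ B2 X (Y ⊗ Z) ∘ Bm (alpha X Y Z);
  B0_counit_l : forall X,
      lam (Bo X) ∘ (B0 ⊠ idm (Bo X)) ∘ B2 munit X = Bm (lam X);
  B0_counit_r : forall X,
      rho (Bo X) ∘ (idm (Bo X) ⊠ B0) ∘ B2 X munit = Bm (rho X);
  mu_B2 : forall X Y,
      B2 X Y ∘ mu (X ⊗ Y) = (mu X ⊠ mu Y) ∘ B2 (Bo X) (Bo Y) ∘ Bm (B2 X Y);
  mu_B0 : B0 ∘ mu munit = B0 ∘ Bm B0;
  eta_B2 : forall X Y, B2 X Y ∘ eta (X ⊗ Y) = eta X ⊠ eta Y;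
  eta_B0 : B0 ∘ eta munit = idm munit }.

Arguments Bo {A} b _ : rename.
Arguments Bm {A} b {X Y} _ : rename.
Arguments mu {A} b X : rename.
Arguments eta {A} b X : rename.
Arguments B2 {A} b X Y : rename.
Arguments B0 {A} b : rename.

Section Derived.
Local Obligation Tactic := idtac.
Variable A : MonoidalCategory.
Variable B : OpmonoidalMonad A.

Local Notation I := (@munit A).
Local Notation BI := (Bo B I).

Definition H_r (X Y : A) : Hom A (Bo B (Bo B X ⊗ Y)) (Bo B X ⊗ Bo B Y) :=
  (mu B X ⊠ idm (Bo B Y)) ∘ B2 B (Bo B X) Y.

Definition RightPreHopf : Prop := forall X : A, is_iso (H_r I X).

Definition thetaR (X : A) : Hom A (Bo B (BI ⊗ X)) (BI ⊗ Bo B X) :=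
  (mu B I ⊠ idm (Bo B X)) ∘ B2 B BI X.

(* the B-action of C^theta(X, alpha) *)
Definition rhoR (X : A) (al : Hom A (Bo B X) X) : Hom A (Bo B (BI ⊗ X)) (BI ⊗ X) :=
  (mu B I ⊠ al) ∘ B2 B BI X.

(* comultiplication and counit of the comonad C = B(1) (x) - ;
   the suppressed constraints are made explicit *)
Definition DeltaCR (X : A) : Hom A (BI ⊗ X) (BI ⊗ (BI ⊗ X)) :=
  alpha BI BI X ∘ ((B2 B I I ∘ Bm B (lam_inv I)) ⊠ idm X).

Definition epsCR (X : A) : Hom A (BI ⊗ X) X :=
  lam X ∘ (B0 B ⊠ idm X).

Record Alg := {
  acar : A;
  aact : Hom A (Bo B acar) acar;
  aact_unit : aact ∘ eta B acar = idm acar;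
  aact_assoc : aact ∘ Bm B aact = aact ∘ mu B acar }.

Definition AlgHom (x y : Alg) : Type :=
  { f : Hom A (acar x) (acar y) | f ∘ aact x = aact y ∘ Bm B f }.

Program Definition AlgCat : Category := {|
  Obj := Alg;
  Hom := AlgHom;
  idm x := exist _ (idm (acar x)) _;
  comp x y z (g : AlgHom y z) (f : AlgHom x y) := exist _ (proj1_sig g ∘ proj1_sig f) _ |}.
Next Obligation. intros; simpl. now rewrite comp_idl, Bm_id, comp_idr. Qed.
Next Obligation. intros; simpl.
  destruct g as [g hg], f as [f hf]; simpl.
  rewrite <- comp_assoc, hf, comp_assoc, hg, <- comp_assoc, Bm_comp; reflexivity.
Qed.
Next Obligation. intros; simpl. apply sig_eq; apply comp_idl. Qed.
Next Obligation. intros; simpl. apply sig_eq; apply comp_idr. Qed.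
Next Obligation. intros; simpl. apply sig_eq; apply comp_assoc. Qed.

Program Definition FreeAlg (X : A) : Alg := {|
  acar := Bo B X; aact := mu B X |}.
Next Obligation. intros; simpl. apply mu_eta_l. Qed.
Next Obligation. intros; simpl. apply mu_assoc. Qed.

Program Definition Tfun : Functor AlgCat AlgCat := {|
  fobj x := FreeAlg (acar x);
  fmap x y f := exist _ (Bm B (proj1_sig f)) _ |}.
Next Obligation. intros; simpl. apply mu_nat. Qed.
Next Obligation. intros; simpl. apply sig_eq; simpl; apply Bm_id. Qed.
Next Obligation. intros; simpl. apply sig_eq; simpl; apply Bm_comp. Qed.

Program Definition Tcom : Comonad AlgCat := {|
  cfun := Tfun;
  cdelta x := exist _ (Bm B (eta B (acar x))) _;
  ceps x := exist _ (aact x) _ |}.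
Next Obligation. intros; simpl. apply mu_nat. Qed.
Next Obligation. intros; simpl. symmetry; apply aact_assoc. Qed.
Next Obligation. intros; simpl.
  apply sig_eq; simpl. rewrite <- !Bm_comp, eta_nat; reflexivity.
Qed.
Next Obligation. intros; simpl. apply sig_eq; simpl. destruct f as [f hf]; exact hf. Qed.
Next Obligation. intros; simpl.
  apply sig_eq; simpl. rewrite <- !Bm_comp, eta_nat; reflexivity.
Qed.
Next Obligation. intros; simpl. apply sig_eq; simpl; apply mu_eta_r. Qed.
Next Obligation. intros; simpl. apply sig_eq; simpl. rewrite <- Bm_comp, aact_unit; apply Bm_id. Qed.

(* C^theta-coalgebras in A^B, i.e. objects of (A^B)_{C^theta}, with the
   C^theta structure maps written out on underlying morphisms *)
Record CoAlg := {
  calg : Alg;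
  cdel : Hom A (acar calg) (BI ⊗ acar calg);
  cdel_hom : cdel ∘ aact calg = rhoR (aact calg) ∘ Bm B cdel;
  cdel_coassoc : DeltaCR (acar calg) ∘ cdel = (idm BI ⊠ cdel) ∘ cdel;
  cdel_counit : epsCR (acar calg) ∘ cdel = idm (acar calg) }.

Definition CoAlgHom (c d : CoAlg) : Type :=
  { f : Hom A (acar (calg c)) (acar (calg d)) |
      f ∘ aact (calg c) = aact (calg d) ∘ Bm B f
      /\ (idm BI ⊠ f) ∘ cdel c = cdel d ∘ f }.

Program Definition CoalgCat : Category := {|
  Obj := CoAlg;
  Hom := CoAlgHom;
  idm c := exist _ (idm (acar (calg c))) _;
  comp x y z (g : CoAlgHom y z) (f : CoAlgHom x y) := exist _ (proj1_sig g ∘ proj1_sig f) _ |}.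
Next Obligation. intros; simpl.
  split.
  - now rewrite comp_idl, Bm_id, comp_idr.
  - now rewrite tens_id, comp_idl, comp_idr.
Qed.
Next Obligation. intros; simpl.
  destruct g as [g [hg hg']], f as [f [hf hf']]; simpl; split.
  - rewrite <- comp_assoc, hf, comp_assoc, hg, <- comp_assoc, Bm_comp; reflexivity.
  - rewrite <- (comp_idl (idm BI)), tens_comp, <- comp_assoc, hf', comp_assoc, hg',
      <- comp_assoc; reflexivity.
Qed.
Next Obligation. intros; simpl. apply sig_eq; apply comp_idl. Qed.
Next Obligation. intros; simpl. apply sig_eq; apply comp_idr. Qed.
Next Obligation. intros; simpl. apply sig_eq; apply comp_assoc. Qed.

Program Definition Vfun : Functor CoalgCat AlgCat := {|
  fobj c := calg c;
  fmap c d f := exist _ (proj1_sig f) _ |}.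
Next Obligation. intros; simpl. exact (proj1 (proj2_sig f)). Qed.
Next Obligation. intros; simpl. apply sig_eq; reflexivity. Qed.
Next Obligation. intros; simpl. apply sig_eq; reflexivity. Qed.

(* The facts asserting that C^theta, G, T^theta and chi as described in the
   paper are well defined (all are consequences of the opmonoidal monad
   axioms; they are asserted -- not assumed -- in the main statement). *)
Record WellDefined : Prop := {
  wd_rho : forall x : Alg,
      rhoR (aact x) ∘ eta B (BI ⊗ acar x) = idm _
      /\ rhoR (aact x) ∘ Bm B (rhoR (aact x)) = rhoR (aact x) ∘ mu B (BI ⊗ acar x);
  wd_Cf : forall (x y : Alg) (f : AlgHom x y),
      (idm BI ⊠ proj1_sig f) ∘ rhoR (aact x) = rhoR (aact y) ∘ Bm B (idm BI ⊠ proj1_sig f);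
  wd_DeltaC_hom : forall x : Alg,
      DeltaCR (acar x) ∘ rhoR (aact x) = rhoR (rhoR (aact x)) ∘ Bm B (DeltaCR (acar x));
  wd_epsC_hom : forall x : Alg,
      epsCR (acar x) ∘ rhoR (aact x) = aact x ∘ Bm B (epsCR (acar x));
  wd_DeltaC_nat : forall (X Y : A) (f : Hom A X Y),
      (idm BI ⊠ (idm BI ⊠ f)) ∘ DeltaCR X = DeltaCR Y ∘ (idm BI ⊠ f);
  wd_epsC_nat : forall (X Y : A) (f : Hom A X Y),
      f ∘ epsCR X = epsCR Y ∘ (idm BI ⊠ f);
  wd_C_coassoc : forall X : A,
      (idm BI ⊠ DeltaCR X) ∘ DeltaCR X = DeltaCR (BI ⊗ X) ∘ DeltaCR X;
  wd_C_counit_l : forall X : A, epsCR (BI ⊗ X) ∘ DeltaCR X = idm _;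
  wd_C_counit_r : forall X : A, (idm BI ⊠ epsCR X) ∘ DeltaCR X = idm _;
  wd_theta_hom : forall X : A,
      thetaR X ∘ mu B (BI ⊗ X) = rhoR (mu B X) ∘ Bm B (thetaR X);
  wd_theta_nat : forall (X Y : A) (f : Hom A X Y),
      (idm BI ⊠ Bm B f) ∘ thetaR X = thetaR Y ∘ Bm B (idm BI ⊠ f);
  wd_Tth_hom : forall c : CoAlg,
      (thetaR (acar (calg c)) ∘ Bm B (cdel c)) ∘ mu B (acar (calg c))
      = rhoR (mu B (acar (calg c))) ∘ Bm B (thetaR (acar (calg c)) ∘ Bm B (cdel c));
  wd_Tth_coassoc : forall c : CoAlg,
      DeltaCR (Bo B (acar (calg c))) ∘ (thetaR (acar (calg c)) ∘ Bm B (cdel c))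
      = (idm BI ⊠ (thetaR (acar (calg c)) ∘ Bm B (cdel c)))
          ∘ (thetaR (acar (calg c)) ∘ Bm B (cdel c));
  wd_Tth_counit : forall c : CoAlg,
      epsCR (Bo B (acar (calg c))) ∘ (thetaR (acar (calg c)) ∘ Bm B (cdel c)) = idm _;
  wd_Tth_map : forall (c d : CoAlg) (f : CoAlgHom c d),
      (idm BI ⊠ Bm B (proj1_sig f)) ∘ (thetaR (acar (calg c)) ∘ Bm B (cdel c))
      = (thetaR (acar (calg d)) ∘ Bm B (cdel d)) ∘ Bm B (proj1_sig f);
  wd_DeltaT : forall c : CoAlg,
      (idm BI ⊠ Bm B (eta B (acar (calg c)))) ∘ (thetaR (acar (calg c)) ∘ Bm B (cdel c))
      = (thetaR (Bo B (acar (calg c)))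
           ∘ Bm B (thetaR (acar (calg c)) ∘ Bm B (cdel c)))
        ∘ Bm B (eta B (acar (calg c)));
  wd_epsT : forall c : CoAlg,
      (idm BI ⊠ aact (calg c)) ∘ (thetaR (acar (calg c)) ∘ Bm B (cdel c))
      = cdel c ∘ aact (calg c) }.

Section WithWD.
Variable w : WellDefined.

Definition CthAlg (x : Alg) : Alg := {|
  acar := BI ⊗ acar x;
  aact := rhoR (aact x);
  aact_unit := proj1 (wd_rho w x);
  aact_assoc := proj2 (wd_rho w x) |}.

Program Definition Cthfun : Functor AlgCat AlgCat := {|
  fobj := CthAlg;
  fmap x y f := exist _ (idm BI ⊠ proj1_sig f) (wd_Cf w f) |}.
Next Obligation. intros; simpl. apply sig_eq; simpl; apply tens_id. Qed.
Next Obligation. intros; simpl. apply sig_eq; simpl. rewrite <- tens_comp, comp_idl; reflexivity. Qed.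

Program Definition Cth : Comonad AlgCat := {|
  cfun := Cthfun;
  cdelta x := exist _ (DeltaCR (acar x)) (wd_DeltaC_hom w x);
  ceps x := exist _ (epsCR (acar x)) (wd_epsC_hom w x) |}.
Next Obligation. intros; simpl. apply sig_eq; simpl; apply (wd_DeltaC_nat w). Qed.
Next Obligation. intros; simpl. apply sig_eq; simpl; apply (wd_epsC_nat w). Qed.
Next Obligation. intros; simpl. apply sig_eq; simpl; apply (wd_C_coassoc w). Qed.
Next Obligation. intros; simpl. apply sig_eq; simpl; apply (wd_C_counit_l w). Qed.
Next Obligation. intros; simpl. apply sig_eq; simpl; apply (wd_C_counit_r w). Qed.

Definition chi (x : Alg) : Hom AlgCat (Tcom (Cth x)) (Cth (Tcom x)) :=
  exist _ (thetaR (acar x)) (wd_theta_hom w (acar x)).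

Definition coact (c : CoAlg) : Hom AlgCat (Vfun c) (Cth (Vfun c)) :=
  exist _ (cdel c) (cdel_hom c).

Definition Gobj (x : Alg) : CoAlg := {|
  calg := CthAlg x;
  cdel := DeltaCR (acar x);
  cdel_hom := wd_DeltaC_hom w x;
  cdel_coassoc := eq_sym (wd_C_coassoc w (acar x));
  cdel_counit := wd_C_counit_l w (acar x) |}.

Program Definition Gfun : Functor AlgCat CoalgCat := {|
  fobj := Gobj;
  fmap x y f := exist _ (idm BI ⊠ proj1_sig f)
                  (conj (wd_Cf w f) (wd_DeltaC_nat w (proj1_sig f))) |}.
Next Obligation. intros; simpl. apply sig_eq; simpl; apply tens_id. Qed.
Next Obligation. intros; simpl. apply sig_eq; simpl. rewrite <- tens_comp, comp_idl; reflexivity. Qed.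

Definition TthObj (c : CoAlg) : CoAlg := {|
  calg := FreeAlg (acar (calg c));
  cdel := thetaR (acar (calg c)) ∘ Bm B (cdel c);
  cdel_hom := wd_Tth_hom w c;
  cdel_coassoc := wd_Tth_coassoc w c;
  cdel_counit := wd_Tth_counit w c |}.

Program Definition Tthfun : Functor CoalgCat CoalgCat := {|
  fobj := TthObj;
  fmap c d f := exist _ (Bm B (proj1_sig f))
                  (conj (mu_nat B (proj1_sig f)) (wd_Tth_map w f)) |}.
Next Obligation. intros; simpl. apply sig_eq; simpl; apply Bm_id. Qed.
Next Obligation. intros; simpl. apply sig_eq; simpl; apply Bm_comp. Qed.

Program Definition Tth : Comonad CoalgCat := {|
  cfun := Tthfun;
  cdelta c := exist _ (Bm B (eta B (acar (calg c))))
                (conj (mu_nat B (eta B (acar (calg c)))) (wd_DeltaT w c));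
  ceps c := exist _ (aact (calg c))
                (conj (eq_sym (aact_assoc (calg c))) (wd_epsT w c)) |}.
Next Obligation. intros; simpl.
  apply sig_eq; simpl. rewrite <- !Bm_comp, eta_nat; reflexivity.
Qed.
Next Obligation. intros; simpl. apply sig_eq; simpl. exact (proj1 (proj2_sig f)). Qed.
Next Obligation. intros; simpl.
  apply sig_eq; simpl. rewrite <- !Bm_comp, eta_nat; reflexivity.
Qed.
Next Obligation. intros; simpl. apply sig_eq; simpl; apply mu_eta_r. Qed.
Next Obligation. intros; simpl.
  apply sig_eq; simpl. rewrite <- Bm_comp, aact_unit; apply Bm_id.
Qed.

(* "Om implements an extension T^theta of T through V -| G":
   Om is a natural isomorphism T^theta G => G T and (G, Om) is a lax
   morphism of comonads from T^theta to T. *)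
Definition ImplementsExtension
    (Om : forall x : Alg, Hom CoalgCat (Tth (Gfun x)) (Gfun (Tcom x))) : Prop :=
  (forall (x y : Alg) (f : Hom AlgCat x y),
      fmap Gfun (fmap Tcom f) ∘ Om x = Om y ∘ fmap Tth (fmap Gfun f))
  /\ (forall x : Alg, is_iso (Om x))
  /\ (forall x : Alg,
      fmap Gfun (cdelta Tcom x) ∘ Om x
      = Om (Tcom x) ∘ fmap Tth (Om x) ∘ cdelta Tth (Gfun x))
  /\ (forall x : Alg, fmap Gfun (ceps Tcom x) ∘ Om x = ceps Tth (Gfun x)).

Definition LeftChiCoalgebra (Z : Category) (N : Functor AlgCat Z)
    (l : forall x : Alg, Hom Z (N (Cth x)) (N (Tcom x))) : Prop :=
  (forall (x y : Alg) (f : Hom AlgCat x y),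
      fmap N (fmap Tcom f) ∘ l x = l y ∘ fmap N (fmap Cth f))
  /\ (forall x : Alg,
      fmap N (cdelta Tcom x) ∘ l x
      = l (Tcom x) ∘ fmap N (chi x) ∘ l (Cth x) ∘ fmap N (cdelta Cth x))
  /\ (forall x : Alg, fmap N (ceps Tcom x) ∘ l x = fmap N (ceps Cth x)).

Definition TthOpcoalgebra (Z : Category) (N : Functor AlgCat Z)
    (nb : forall c : CoAlg, Hom Z (N (Vfun c)) (N (Vfun (Tth c)))) : Prop :=
  (forall (c d : CoAlg) (f : Hom CoalgCat c d),
      fmap N (fmap Vfun (fmap Tth f)) ∘ nb c = nb d ∘ fmap N (fmap Vfun f))
  /\ (forall c : CoAlg,
      fmap N (fmap Vfun (cdelta Tth c)) ∘ nb c = nb (Tth c) ∘ nb c)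
  /\ (forall c : CoAlg, fmap N (fmap Vfun (ceps Tth c)) ∘ nb c = idm _).

Definition lam_to_nabla (Z : Category) (N : Functor AlgCat Z)
    (l : forall x : Alg, Hom Z (N (Cth x)) (N (Tcom x))) :
    forall c : CoAlg, Hom Z (N (Vfun c)) (N (Vfun (Tth c))) :=
  fun c => l (Vfun c) ∘ fmap N (coact c).

Definition nabla_to_lam (Z : Category) (N : Functor AlgCat Z)
    (nb : forall c : CoAlg, Hom Z (N (Vfun c)) (N (Vfun (Tth c)))) :
    forall x : Alg, Hom Z (N (Cth x)) (N (Tcom x)) :=
  fun x => fmap N (fmap Tcom (ceps Cth x)) ∘ nb (Gfun x).

End WithWD.
End Derived.

Arguments thetaR {A} B X.
Arguments RightPreHopf {A} B.
Arguments WellDefined {A} B.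
Arguments acar {A B} a.
Arguments Alg {A} B.
Arguments AlgCat {A} B.
Arguments CoalgCat {A} B.
Arguments Tcom {A} B.
Arguments Tth {A B} w.
Arguments Gfun {A B} w.
Arguments ImplementsExtension {A B} w Om.
Arguments LeftChiCoalgebra {A B} w {Z} N l.
Arguments TthOpcoalgebra {A B} w {Z} N nb.
Arguments lam_to_nabla {A B} w {Z} N l c.
Arguments nabla_to_lam {A B} w {Z} N nb x.

From Stdlib Require Import Setoid FunctionalExtensionality.

(* Everything rests on B(1) being a coalgebra (comultiplication B_2(1,1), counit
   B_0) on which B acts by mu_1: the two fusion identities for maps
   (mu_1 (x) g) B_2(B(1), X) -- compatibility with the comultiplication and the
   counit of C = B(1) (x) - -- give all the well-definedness facts about C^theta,
   G, T^theta and chi, and show that theta = H^r_{1,-} is a natural morphism of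
   C^theta-coalgebras T^theta G => G T compatible with both comonads.  If B is
   right pre-Hopf, theta is invertible in A, and an inverse in A of a coalgebra
   morphism is again one, so Omega is an isomorphism.  The bijection is transport
   along V -| G, whose unit is the coaction delta and whose counit is eps^C:
   lambda |-> lambda_V N(delta) and nabla |-> N(T eps^C) nabla_G. *)

Lemma comp_whisker_r {C : Category} {X Y : C} {f g : Hom C X Y} :
  f = g -> forall W (k : Hom C W X), f ∘ k = g ∘ k.
Proof. now intros ->. Qed.

Ltac reassoc_r := repeat rewrite <- comp_assoc.
Ltac reassoc_l := repeat rewrite comp_assoc.

Ltac instantiate_all H := repeat match type of H with forall x : ?T, _ =>
  let e := fresh in evar (e : T); specialize (H e); subst e end.

(* Rewrites with an equation between composites inside a right-associated chain,
   also when its left-hand side is only a prefix [_ ∘ (_ ∘ k)] of a subchain.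
   The setoid_rewrite fallbacks are needed because the hidden object arguments
   of [∘] are often only convertible (e.g. [V (Tth c)] versus [T (V c)]), which
   plain rewrite does not see through. *)
Ltac rewrite_comp H :=
  let E := fresh in
  pose proof H as E; instantiate_all E; repeat rewrite <- comp_assoc in E; reassoc_r;
  first
    [ rewrite E
    | setoid_rewrite E
    | lazymatch type of E with @eq (Hom ?C ?X _) _ _ =>
        let W := fresh in let k := fresh in
        evar (W : Obj C); evar (k : Hom C W X);
        let Ek := fresh in
        pose proof (comp_whisker_r E W k) as Ek; subst W k;
        repeat rewrite <- comp_assoc in Ek;
        first [ rewrite Ek | setoid_rewrite Ek ]; clear Ek
      end ];
  clear E; reassoc_r.

Lemma iso_square_inverse {C : Category} {X Y X' Y' : C}
    (f : Hom C X' Y') (g : Hom C Y' X') (a : Hom C X X') (b : Hom C Y Y')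
    (F : Hom C X Y) (G : Hom C Y X) :
  g ∘ f = idm X' -> F ∘ G = idm Y -> f ∘ a = b ∘ F -> g ∘ b = a ∘ G.
Proof.
  intros Hgf HFG Hsq.
  rewrite <- (comp_idr b), <- HFG, (comp_assoc b F G), <- Hsq.
  reassoc_l; rewrite Hgf, comp_idl; reflexivity.
Qed.

Lemma fmap_comp_eq {C D : Category} (F : Functor C D) {X Y Z : C}
    (g : Hom C Y Z) (f : Hom C X Y) (h : Hom C X Z) :
  g ∘ f = h -> fmap F g ∘ fmap F f = fmap F h.
Proof. intros <-; symmetry; apply fmap_comp. Qed.

Lemma comp_cancel_split_epi {C : Category} {X Y Z : C}
    (p : Hom C X Y) (s : Hom C Y X) (f g : Hom C Y Z) :
  p ∘ s = idm Y -> f ∘ p = g ∘ p -> f = g.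
Proof.
  intros Hps H.
  rewrite <- (comp_idr f), <- (comp_idr g), <- Hps, !comp_assoc, H; reflexivity.
Qed.

Section Monoidal.
Variable M : MonoidalCategory.
Local Notation I := (@munit M).

Lemma tens_merge {X X' X'' Y Y' Y'' : M} (f' : Hom M X' X'') (f : Hom M X X')
    (g' : Hom M Y' Y'') (g : Hom M Y Y') :
  (f' ⊠ g') ∘ (f ⊠ g) = (f' ∘ f) ⊠ (g' ∘ g).
Proof. symmetry; apply tens_comp. Qed.

Lemma tens_idl_comp {X Y Y' Y'' : M} (g' : Hom M Y' Y'') (g : Hom M Y Y') :
  idm X ⊠ (g' ∘ g) = (idm X ⊠ g') ∘ (idm X ⊠ g).
Proof. rewrite tens_merge, comp_idl; reflexivity. Qed.

Lemma tens_idr_comp {X Y Y' Y'' : M} (g' : Hom M Y' Y'') (g : Hom M Y Y') :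
  (g' ∘ g) ⊠ idm X = (g' ⊠ idm X) ∘ (g ⊠ idm X).
Proof. rewrite tens_merge, comp_idl; reflexivity. Qed.

Lemma tens_unit_l_inj (X Y : M) (f g : Hom M X Y) : idm I ⊠ f = idm I ⊠ g -> f = g.
Proof.
  intros H.
  assert (E : forall h : Hom M X Y, h = lam Y ∘ (idm I ⊠ h) ∘ lam_inv X).
  { intro h. rewrite <- lam_nat, <- comp_assoc, lam_iso2, comp_idr; reflexivity. }
  rewrite (E f), (E g), H; reflexivity.
Qed.

Lemma tens_unit_r_inj (X Y : M) (f g : Hom M X Y) : f ⊠ idm I = g ⊠ idm I -> f = g.
Proof.
  intros H.
  assert (E : forall h : Hom M X Y, h = rho Y ∘ (h ⊠ idm I) ∘ rho_inv X).
  { intro h. rewrite <- rho_nat, <- comp_assoc, rho_iso2, comp_idr; reflexivity. }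
  rewrite (E f), (E g), H; reflexivity.
Qed.

Lemma lam_alpha (X Y : M) : lam (X ⊗ Y) ∘ alpha I X Y = lam X ⊠ idm Y.
Proof.
  (* Kelly: tensor with I on the left, precompose with the invertible
     alpha ∘ (alpha ⊠ id), then use the pentagon and the triangle (twice). *)
  apply tens_unit_l_inj.
  apply (comp_cancel_split_epi
           (alpha I (I ⊗ X) Y ∘ (alpha I I X ⊠ idm Y))
           ((alpha_inv I I X ⊠ idm Y) ∘ alpha_inv I (I ⊗ X) Y)).
  - rewrite_comp @tens_merge. rewrite alpha_iso2, comp_idl, tens_id, comp_idl.
    apply alpha_iso2.
  - rewrite tens_idl_comp. reassoc_r.
    rewrite_comp (eq_sym (pentagon I I X Y)).
    rewrite_comp triangle. rewrite <- (tens_id X Y).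
    rewrite_comp alpha_nat. rewrite_comp alpha_nat.
    rewrite_comp @tens_merge. rewrite_comp triangle. rewrite comp_idl. reflexivity.
Qed.

Lemma lam_unit_tens (X : M) : lam (I ⊗ X) = idm I ⊠ lam X.
Proof.
  rewrite <- (comp_idl (lam (I ⊗ X))), <- (lam_iso1 X), <- comp_assoc, lam_nat,
    comp_assoc, lam_iso1, comp_idl; reflexivity.
Qed.

Lemma lam_unit_rho : lam I = rho I.
Proof.
  apply tens_unit_r_inj. rewrite <- triangle, <- lam_alpha, lam_unit_tens. reflexivity.
Qed.

Lemma lam_inv_coassoc :
  alpha I I I ∘ (lam_inv I ⊠ idm I) ∘ lam_inv I = (idm I ⊠ lam_inv I) ∘ lam_inv I.
Proof.
  assert (Ha : alpha I I I = (idm I ⊠ lam_inv I) ∘ (lam I ⊠ idm I)).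
  { rewrite lam_unit_rho, <- triangle. rewrite_comp @tens_merge.
    rewrite comp_idl, lam_iso1, tens_id, comp_idl; reflexivity. }
  rewrite Ha. rewrite_comp (eq_sym (@tens_idr_comp I _ _ _ (lam I) (lam_inv I))).
  rewrite lam_iso2, tens_id, comp_idl; reflexivity.
Qed.

End Monoidal.

Ltac merge_tens :=
  repeat (rewrite_comp @tens_merge); repeat rewrite comp_idl; repeat rewrite comp_idr.

Section OpmonoidalMonad.
Variable A : MonoidalCategory.
Variable B : OpmonoidalMonad A.
Local Notation I := (@munit A).
Local Notation BI := (Bo B I).
Local Notation comulBI := (B2 B I I ∘ Bm B (lam_inv I)).

Lemma B2_nat_r {X X' Y Y' : A} (f : Hom A X X') (g : Hom A Y Y') :
  B2 B X' Y' ∘ Bm B (f ⊠ g) = (Bm B f ⊠ Bm B g) ∘ B2 B X Y.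
Proof. symmetry; apply B2_nat. Qed.

Lemma comulBI_mu : comulBI ∘ mu B I = (mu B I ⊠ mu B I) ∘ B2 B BI BI ∘ Bm B comulBI.
Proof.
  reassoc_r. rewrite mu_nat. rewrite_comp (mu_B2 B I I). rewrite Bm_comp. reflexivity.
Qed.

Lemma comulBI_coassoc :
  alpha BI BI BI ∘ (comulBI ⊠ idm BI) ∘ comulBI = (idm BI ⊠ comulBI) ∘ comulBI.
Proof.
  rewrite tens_idr_comp, tens_idl_comp, <- (Bm_id B I).
  rewrite_comp (B2_nat B). rewrite_comp (B2_nat B). rewrite Bm_id.
  rewrite_comp (B2_coassoc B I I I).
  rewrite <- !Bm_comp. do 3 f_equal. reassoc_l. apply lam_inv_coassoc.
Qed.

Lemma DeltaCR_fusion (X Y : A) (g : Hom A (Bo B X) Y) :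
  DeltaCR B Y ∘ ((mu B I ⊠ g) ∘ B2 B BI X)
  = (mu B I ⊠ ((mu B I ⊠ g) ∘ B2 B BI X)) ∘ B2 B BI (BI ⊗ X) ∘ Bm B (DeltaCR B X).
Proof.
  unfold DeltaCR.
  replace (mu B I ⊠ ((mu B I ⊠ g) ∘ B2 B BI X))
    with ((mu B I ⊠ (mu B I ⊠ g)) ∘ (idm _ ⊠ B2 B BI X))
    by (rewrite tens_merge, comp_idr; reflexivity).
  rewrite Bm_comp.
  rewrite_comp (eq_sym (B2_coassoc B BI BI X)).
  rewrite_comp (eq_sym (B2_nat B comulBI (idm X))). rewrite Bm_id.
  rewrite_comp alpha_nat. merge_tens.
  rewrite_comp comulBI_mu. reflexivity.
Qed.

Lemma epsCR_fusion (X Y : A) (g : Hom A (Bo B X) Y) :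
  epsCR B Y ∘ ((mu B I ⊠ g) ∘ B2 B BI X) = g ∘ Bm B (epsCR B X).
Proof.
  unfold epsCR.
  rewrite_comp tens_merge. rewrite mu_B0, comp_idl.
  replace ((B0 B ∘ Bm B (B0 B)) ⊠ g)
    with ((idm I ⊠ g) ∘ (B0 B ⊠ idm _) ∘ (Bm B (B0 B) ⊠ Bm B (idm X)))
    by (rewrite Bm_id; merge_tens; reflexivity).
  rewrite_comp (eq_sym (lam_nat g)).
  rewrite_comp (B2_nat B). rewrite_comp (B0_counit_l B). rewrite Bm_comp. reflexivity.
Qed.

Lemma thetaR_mu (X : A) : thetaR B X ∘ mu B (BI ⊗ X) = rhoR (mu B X) ∘ Bm B (thetaR B X).
Proof.
  unfold thetaR, rhoR. rewrite Bm_comp. rewrite_comp (mu_B2 B).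
  rewrite_comp (B2_nat_r (mu B I) (idm (Bo B X))). rewrite Bm_id. merge_tens.
  rewrite mu_assoc. reflexivity.
Qed.

Lemma thetaR_nat (X Y : A) (f : Hom A X Y) :
  (idm BI ⊠ Bm B f) ∘ thetaR B X = thetaR B Y ∘ Bm B (idm BI ⊠ f).
Proof.
  unfold thetaR. rewrite_comp (B2_nat_r (idm BI) f). rewrite Bm_id. merge_tens. reflexivity.
Qed.

Lemma thetaR_eta (X : A) : thetaR B X ∘ eta B (BI ⊗ X) = idm BI ⊠ eta B X.
Proof. unfold thetaR. rewrite_comp eta_B2. merge_tens. rewrite mu_eta_l. reflexivity. Qed.

Lemma epsCR_thetaR (X : A) : epsCR B (Bo B X) ∘ thetaR B X = Bm B (epsCR B X).
Proof. unfold thetaR. rewrite epsCR_fusion, comp_idl. reflexivity. Qed.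

Lemma DeltaCR_thetaR (X : A) :
  (idm BI ⊠ thetaR B X) ∘ (thetaR B (BI ⊗ X) ∘ Bm B (DeltaCR B X))
  = DeltaCR B (Bo B X) ∘ thetaR B X.
Proof.
  unfold thetaR at 3. rewrite DeltaCR_fusion. unfold thetaR. merge_tens. reflexivity.
Qed.

Lemma rhoR_eta (X : A) (al : Hom A (Bo B X) X) :
  al ∘ eta B X = idm X -> rhoR al ∘ eta B (BI ⊗ X) = idm _.
Proof.
  intros Hunit. unfold rhoR. rewrite_comp eta_B2. merge_tens.
  rewrite mu_eta_l, Hunit, tens_id. reflexivity.
Qed.

Lemma rhoR_mu (X : A) (al : Hom A (Bo B X) X) :
  al ∘ Bm B al = al ∘ mu B X -> rhoR al ∘ Bm B (rhoR al) = rhoR al ∘ mu B (BI ⊗ X).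
Proof.
  intros Hassoc. unfold rhoR. rewrite Bm_comp. rewrite_comp (mu_B2 B).
  rewrite_comp (B2_nat_r (mu B I) al). merge_tens. rewrite mu_assoc, Hassoc. reflexivity.
Qed.

Lemma rhoR_nat (X Y : A) (al : Hom A (Bo B X) X) (be : Hom A (Bo B Y) Y) (f : Hom A X Y) :
  f ∘ al = be ∘ Bm B f -> (idm BI ⊠ f) ∘ rhoR al = rhoR be ∘ Bm B (idm BI ⊠ f).
Proof.
  intros Hf. unfold rhoR. rewrite_comp (B2_nat_r (idm BI) f). rewrite Bm_id. merge_tens.
  rewrite Hf. reflexivity.
Qed.

Lemma DeltaCR_nat (X Y : A) (f : Hom A X Y) :
  (idm BI ⊠ (idm BI ⊠ f)) ∘ DeltaCR B X = DeltaCR B Y ∘ (idm BI ⊠ f).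
Proof. unfold DeltaCR. rewrite_comp alpha_nat. rewrite tens_id. merge_tens. reflexivity. Qed.

Lemma epsCR_nat (X Y : A) (f : Hom A X Y) : f ∘ epsCR B X = epsCR B Y ∘ (idm BI ⊠ f).
Proof. unfold epsCR. rewrite comp_assoc, lam_nat. merge_tens. reflexivity. Qed.

Lemma DeltaCR_coassoc (X : A) :
  (idm BI ⊠ DeltaCR B X) ∘ DeltaCR B X = DeltaCR B (BI ⊗ X) ∘ DeltaCR B X.
Proof.
  unfold DeltaCR. rewrite <- (tens_id BI X), tens_idl_comp.
  rewrite_comp (alpha_nat (idm BI) comulBI (idm X)).
  rewrite_comp (alpha_nat comulBI (idm BI) (idm X)).
  rewrite_comp (pentagon BI BI BI X). merge_tens.
  rewrite_comp comulBI_coassoc. reflexivity.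
Qed.

Lemma DeltaCR_counit_l (X : A) : epsCR B (BI ⊗ X) ∘ DeltaCR B X = idm _.
Proof.
  unfold epsCR, DeltaCR. rewrite <- (tens_id BI X).
  rewrite_comp (alpha_nat (B0 B) (idm BI) (idm X)).
  rewrite_comp (lam_alpha A BI X). merge_tens. rewrite_comp (B0_counit_l B I).
  rewrite <- Bm_comp, lam_iso2, Bm_id, tens_id. reflexivity.
Qed.

Lemma DeltaCR_counit_r (X : A) : (idm BI ⊠ epsCR B X) ∘ DeltaCR B X = idm _.
Proof.
  unfold epsCR, DeltaCR. rewrite tens_idl_comp.
  rewrite_comp (alpha_nat (idm BI) (B0 B) (idm X)).
  rewrite_comp (triangle BI X). merge_tens. rewrite_comp (B0_counit_r B I).
  rewrite <- lam_unit_rho, <- Bm_comp, lam_iso2, Bm_id, tens_id. reflexivity.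
Qed.

Section LiftedCoaction.
Variable c : CoAlg B.
Local Notation X := (acar (calg c)).
Local Notation coactT := (thetaR B X ∘ Bm B (cdel c)).

Lemma coactT_mu : coactT ∘ mu B X = rhoR (mu B X) ∘ Bm B coactT.
Proof.
  reassoc_r. rewrite mu_nat. reassoc_l. rewrite thetaR_mu, Bm_comp, comp_assoc.
  reflexivity.
Qed.

Lemma coactT_coassoc : DeltaCR B (Bo B X) ∘ coactT = (idm BI ⊠ coactT) ∘ coactT.
Proof.
  rewrite tens_idl_comp. rewrite_comp (thetaR_nat _ _ (cdel c)).
  rewrite <- Bm_comp, <- cdel_coassoc, Bm_comp.
  rewrite_comp DeltaCR_thetaR. reflexivity.
Qed.

Lemma coactT_counit : epsCR B (Bo B X) ∘ coactT = idm _.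
Proof. reassoc_l. rewrite epsCR_thetaR, <- Bm_comp, cdel_counit, Bm_id. reflexivity. Qed.

Lemma coactT_eta :
  (idm BI ⊠ Bm B (eta B X)) ∘ coactT = (thetaR B (Bo B X) ∘ Bm B coactT) ∘ Bm B (eta B X).
Proof.
  rewrite Bm_comp. reassoc_r. rewrite <- (Bm_comp B (Bm B (cdel c))), eta_nat, Bm_comp.
  rewrite (comp_assoc (Bm B (thetaR B _))), <- Bm_comp, thetaR_eta.
  reassoc_l. rewrite thetaR_nat. reflexivity.
Qed.

Lemma coactT_act : (idm BI ⊠ aact (calg c)) ∘ coactT = cdel c ∘ aact (calg c).
Proof. rewrite cdel_hom. unfold thetaR, rhoR. merge_tens. reflexivity. Qed.

End LiftedCoaction.

Lemma coactT_nat (c d : CoAlg B) (f : CoAlgHom c d) :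
  (idm BI ⊠ Bm B (proj1_sig f)) ∘ (thetaR B (acar (calg c)) ∘ Bm B (cdel c))
  = (thetaR B (acar (calg d)) ∘ Bm B (cdel d)) ∘ Bm B (proj1_sig f).
Proof.
  reassoc_l. rewrite thetaR_nat. reassoc_r. rewrite <- !Bm_comp, (proj2 (proj2_sig f)).
  reflexivity.
Qed.

Lemma wellDefined : WellDefined B.
Proof.
  constructor.
  - intro x; split; [apply rhoR_eta, aact_unit | apply rhoR_mu, aact_assoc].
  - intros x y [f Hf]; apply rhoR_nat, Hf.
  - intro x; apply DeltaCR_fusion.
  - intro x; apply epsCR_fusion.
  - apply DeltaCR_nat.
  - apply epsCR_nat.
  - apply DeltaCR_coassoc.
  - apply DeltaCR_counit_l.
  - apply DeltaCR_counit_r.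
  - apply thetaR_mu.
  - apply thetaR_nat.
  - apply coactT_mu.
  - apply coactT_coassoc.
  - apply coactT_counit.
  - apply coactT_nat.
  - apply coactT_eta.
  - apply coactT_act.
Qed.

End OpmonoidalMonad.

Section Extension.
Variable A : MonoidalCategory.
Variable B : OpmonoidalMonad A.
Variable w : WellDefined B.
Local Notation BI := (Bo B munit).

Lemma CoAlgHom_is_iso (c d : CoAlg B) (f : Hom (CoalgCat B) c d) :
  is_iso (proj1_sig f) -> is_iso f.
Proof.
  destruct f as [f [Hact Hcoact]]; simpl. intros [g [Hgf Hfg]].
  assert (Hg : g ∘ aact (calg d) = aact (calg c) ∘ Bm B g
               /\ (idm BI ⊠ g) ∘ cdel d = cdel c ∘ g).
  { split.
    - apply (iso_square_inverse f g _ _ (Bm B f)); [exact Hgf | | exact Hact].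
      rewrite <- Bm_comp, Hfg; apply Bm_id.
    - apply (iso_square_inverse (idm BI ⊠ f) (idm BI ⊠ g) _ _ f); [| exact Hfg | exact Hcoact].
      rewrite tens_merge, Hgf, comp_idl; apply tens_id. }
  exists (exist _ g Hg); split; apply sig_eq; assumption.
Qed.

Definition Omega (x : Alg B) : Hom (CoalgCat B) (Tth w (Gfun w x)) (Gfun w (Tcom B x)) :=
  exist _ (thetaR B (acar x)) (conj (thetaR_mu A B (acar x)) (DeltaCR_thetaR A B (acar x))).

Lemma Omega_implements_extension : RightPreHopf B -> ImplementsExtension w Omega.
Proof.
  intros Hhopf. split; [|split; [|split]].
  - intros x y f. apply sig_eq; simpl. apply thetaR_nat.
  - intros x. apply CoAlgHom_is_iso, (Hhopf (acar x)).
  - intros x. apply sig_eq; simpl.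
    rewrite <- comp_assoc, <- Bm_comp, thetaR_eta, <- thetaR_nat. reflexivity.
  - intros x. apply sig_eq; simpl. unfold thetaR, rhoR. merge_tens. reflexivity.
Qed.
End Extension.

Section Correspondence.
Variable A : MonoidalCategory.
Variable B : OpmonoidalMonad A.
Variable w : WellDefined B.
Local Notation T := (Tcom B).
Local Notation C := (Cth w).
Local Notation V := (Vfun B).
Local Notation G := (Gfun w).
Local Notation Tth := (Tth w).
Local Notation Omega := (Omega A B w).

Definition coact_coalg (c : CoAlg B) : Hom (CoalgCat B) c (G (V c)) :=
  exist _ (cdel c) (conj (cdel_hom c) (eq_sym (cdel_coassoc c))).

Lemma V_coact_coalg (c : CoAlg B) : fmap V (coact_coalg c) = coact w c.
Proof. apply sig_eq; reflexivity. Qed.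

Lemma V_Omega (x : Alg B) : fmap V (Omega x) = chi w x.
Proof. apply sig_eq; reflexivity. Qed.

Lemma V_G_fmap (x y : Alg B) (f : Hom (AlgCat B) x y) : fmap V (fmap G f) = fmap C f.
Proof. apply sig_eq; reflexivity. Qed.

Lemma V_Tth_fmap (c d : CoAlg B) (f : Hom (CoalgCat B) c d) :
  fmap V (fmap Tth f) = fmap T (fmap V f).
Proof. apply sig_eq; reflexivity. Qed.

Lemma V_Tth_cdelta (c : CoAlg B) : fmap V (cdelta Tth c) = cdelta T (V c).
Proof. apply sig_eq; reflexivity. Qed.

Lemma V_Tth_ceps (c : CoAlg B) : fmap V (ceps Tth c) = ceps T (V c).
Proof. apply sig_eq; reflexivity. Qed.

Lemma cdelta_C_coact_coalg (x : Alg B) : cdelta C x = fmap V (coact_coalg (G x)).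
Proof. apply sig_eq; reflexivity. Qed.

Lemma coact_Tth (c : CoAlg B) : coact w (Tth c) = chi w (V c) ∘ fmap T (coact w c).
Proof. apply sig_eq; reflexivity. Qed.

Lemma coact_nat (c d : CoAlg B) (f : Hom (CoalgCat B) c d) :
  fmap C (fmap V f) ∘ coact w c = coact w d ∘ fmap V f.
Proof. apply sig_eq; exact (proj2 (proj2_sig f)). Qed.

Lemma coact_coassoc (c : CoAlg B) :
  fmap C (coact w c) ∘ coact w c = cdelta C (V c) ∘ coact w c.
Proof. apply sig_eq; symmetry; apply cdel_coassoc. Qed.

Lemma coact_counit (c : CoAlg B) : ceps C (V c) ∘ coact w c = idm (V c).
Proof. apply sig_eq; apply cdel_counit. Qed.

Lemma chi_counit (x : Alg B) :
  cdelta T x ∘ fmap T (ceps C x)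
  = fmap T (ceps C (T x)) ∘ fmap T (chi w x) ∘ cdelta T (C x).
Proof.
  apply sig_eq; simpl.
  rewrite <- !Bm_comp, epsCR_thetaR, eta_nat. reflexivity.
Qed.

Section Functor.
Variable Z : Category.
Variable N : Functor (AlgCat B) Z.

Lemma lam_to_nabla_opcoalgebra l :
  LeftChiCoalgebra w N l -> TthOpcoalgebra w N (lam_to_nabla w N l).
Proof.
  intros [Hnat [Hcomul Hcounit]]. unfold lam_to_nabla. split; [|split].
  - intros c d f. rewrite V_Tth_fmap, comp_assoc. setoid_rewrite Hnat.
    reassoc_r. rewrite <- !fmap_comp. setoid_rewrite coact_nat. reflexivity.
  - intros c. rewrite V_Tth_cdelta, coact_Tth, comp_assoc, Hcomul.
    reassoc_r. rewrite (fmap_comp_eq N _ _ _ (eq_sym (coact_coassoc c))), fmap_comp.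
    rewrite_comp (eq_sym (Hnat _ _ (coact w c))).
    rewrite fmap_comp. reassoc_r. reflexivity.
  - intros c. rewrite V_Tth_ceps, comp_assoc, Hcounit, <- fmap_comp, coact_counit.
    apply fmap_id.
Qed.

Lemma nabla_to_lam_left_chi_coalgebra nb :
  TthOpcoalgebra w N nb -> LeftChiCoalgebra w N (nabla_to_lam w N nb).
Proof.
  intros [Hnat [Hcomul Hcounit]]. unfold nabla_to_lam. split; [|split].
  - intros x y f. rewrite <- (V_G_fmap _ _ f).
    rewrite_comp (eq_sym (Hnat _ _ (fmap G f))). rewrite V_Tth_fmap, V_G_fmap.
    reassoc_l. rewrite <- !fmap_comp, (ceps_nat C), (fmap_comp T).
    reflexivity.
  - intros x. rewrite cdelta_C_coact_coalg.
    rewrite_comp (eq_sym (Hnat _ _ (coact_coalg (G x)))). rewrite V_Tth_fmap, V_coact_coalg.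
    rewrite_comp (fmap_comp_eq N _ _ _ (fmap_comp_eq T _ _ _ (coact_counit (G x)))).
    rewrite !fmap_id, comp_idl.
    rewrite <- (V_Omega x). rewrite_comp (eq_sym (Hnat _ _ (Omega x))).
    rewrite_comp (eq_sym (Hcomul (G x))). rewrite V_Tth_fmap, V_Tth_cdelta, V_Omega.
    rewrite_comp (fmap_comp_eq N _ _ _ (chi_counit x)). rewrite !fmap_comp. reassoc_r.
    reflexivity.
  - intros x. rewrite comp_assoc, <- fmap_comp, <- (ceps_nat T), fmap_comp.
    setoid_rewrite <- (V_Tth_ceps (G x)). rewrite_comp Hcounit. apply comp_idr.
Qed.

Lemma lam_to_nablaK l : LeftChiCoalgebra w N l -> nabla_to_lam w N (lam_to_nabla w N l) = l.
Proof.
  intros [Hnat _]. apply functional_extensionality_dep; intro x.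
  unfold nabla_to_lam, lam_to_nabla. rewrite_comp Hnat.
  rewrite_comp (fmap_comp_eq N _ _ _ (ccounit_r C x)). rewrite fmap_id. apply comp_idr.
Qed.

Lemma nabla_to_lamK nb : TthOpcoalgebra w N nb -> lam_to_nabla w N (nabla_to_lam w N nb) = nb.
Proof.
  intros [Hnat _]. apply functional_extensionality_dep; intro c.
  unfold nabla_to_lam, lam_to_nabla. rewrite <- V_coact_coalg.
  rewrite_comp (eq_sym (Hnat _ _ (coact_coalg c))). rewrite V_Tth_fmap, V_coact_coalg.
  rewrite_comp (fmap_comp_eq N _ _ _ (fmap_comp_eq T _ _ _ (coact_counit c))).
  rewrite !fmap_id. apply comp_idl.
Qed.

End Functor.
End Correspondence.

Theorem corollary3p15 (A : MonoidalCategory) (B : OpmonoidalMonad A) :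
  RightPreHopf B ->
  WellDefined B /\
  forall w : WellDefined B,
    (exists Om : forall x : Alg B,
        Hom (CoalgCat B) (Tth w (Gfun w x)) (Gfun w (Tcom B x)),
        (forall x : Alg B, proj1_sig (Om x) = thetaR B (acar x))
        /\ ImplementsExtension w Om)
    /\ (forall (Z : Category) (N : Functor (AlgCat B) Z),
          (forall l, LeftChiCoalgebra w N l -> TthOpcoalgebra w N (lam_to_nabla w N l))
          /\ (forall nb, TthOpcoalgebra w N nb -> LeftChiCoalgebra w N (nabla_to_lam w N nb))
          /\ (forall l, LeftChiCoalgebra w N l -> nabla_to_lam w N (lam_to_nabla w N l) = l)
          /\ (forall nb, TthOpcoalgebra w N nb -> lam_to_nabla w N (nabla_to_lam w N nb) = nb)).
Proof.
  intros Hhopf. split; [exact (wellDefined A B) |].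
  intros w. split.
  - exists (Omega A B w). split; [reflexivity | exact (Omega_implements_extension A B w Hhopf)].
  - intros Z N. split; [|split; [|split]].
    + apply lam_to_nabla_opcoalgebra.
    + apply nabla_to_lam_left_chi_coalgebra.
    + apply lam_to_nablaK.
    + apply nabla_to_lamK.
Qed.
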